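(* The following two statements are equivalent. (C) For every finite GCD-closed set $\mathcal{N}\subseteq\mathbb{N}^+$ with $\#\mathcal{N}\ge2$, there exist a prime $p$ and an integer $k\ge1$ such that $p^k$ divides at least one member of $\mathcal{N}$ and $\#\{n\in\mathcal{N}:p^k\mid n\}\le\tfrac12\#\mathcal{N}$. (D) (Intersection-closed sets conjecture) For every finite intersection-closed family $\mathcal{S}$ of finite sets with $\#\mathcal{S}\ge2$, there exists an element $x\in\bigcup\mathcal{S}$ such that $\#\{A\in\mathcal{S}:x\in A\}\le\tfrac12\#\mathcal{S}$.
   Context: $\mathbb{N}^+=\{1,2,3,\dots\}$. A nonempty $\mathcal{N}\subseteq\mathbb{N}^+$ is GCD-closed if $m,n\in\mathcal{N}$ implies $\gcd(m,n)\in\mathcal{N}$. A family $\mathcal{S}$ of sets is intersection-closed if $A,B\in\mathcal{S}$ implies $A\cap B\in\mathcal{S}$. *)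

From mathcomp Require Import all_boot.
Set Implicit Arguments. Unset Strict Implicit. Unset Printing Implicit Defensive.

(* A finite set of positive integers is represented by a duplicate-free list. *)
Definition gcd_closed (N : seq nat) : Prop :=
  forall m n, m \in N -> n \in N -> gcdn m n \in N.

Definition statement_C : Prop :=
  forall N : seq nat,
    uniq N -> all (fun n => 0 < n) N -> gcd_closed N -> 2 <= size N ->
    exists p k : nat,
      [/\ prime p, 1 <= k, has (fun n => p ^ k %| n) N &
          2 * count (fun n => p ^ k %| n) N <= size N].

Definition inter_closed (T : finType) (S : {set {set T}}) : Prop :=
  forall A B, A \in S -> B \in S -> A :&: B \in S.

Definition statement_D : Prop :=
  forall (T : finType) (S : {set {set T}}),
    inter_closed S -> 2 <= #|S| ->
    exists x : T,
      x \in \bigcup_(A in S) A /\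
      2 * #|[set A in S | x \in A]| <= #|S|.

From mathcomp Require Import all_boot.
Set Implicit Arguments. Unset Strict Implicit. Unset Printing Implicit Defensive.

(* Encode a family of subsets of T by giving each point its own prime and each
   set the product of the primes of its points: intersections become gcds and
   the sets containing x become the codes divisible by the prime of x, so (C)
   yields (D).  Conversely encode a positive integer by its set of prime-power
   divisors: this is injective, gcds become intersections, and the numbers
   divisible by p^k become the sets containing p^k, so (D) yields (C). *)

Lemma logn_prod_primes (I : finType) (A : {pred I}) (F : I -> nat) p :
  (forall i, prime (F i)) -> logn p (\prod_(i in A) F i) = \sum_(i in A) (p == F i).
Proof.
move=> F_prime.
suff [] : 0 < \prod_(i in A) F i /\ logn p (\prod_(i in A) F i) = \sum_(i in A) (p == F i) by [].
apply: (big_ind2 (fun a b => 0 < a /\ logn p a = b)); first by rewrite logn1.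
  by move=> a1 b1 a2 b2 [a1_gt0 <-] [a2_gt0 <-]; rewrite muln_gt0 a1_gt0 a2_gt0 lognM.
by move=> i _; rewrite prime_gt0 ?logn_prime.
Qed.

Lemma logn_prod_inj_primes (I : finType) (A : {pred I}) (F : I -> nat) x :
  (forall i, prime (F i)) -> injective F -> logn (F x) (\prod_(i in A) F i) = (x \in A).
Proof.
move=> F_prime F_inj; rewrite logn_prod_primes //.
under eq_bigr => i _ do rewrite (inj_eq F_inj) eq_sym.
by rewrite -big_mkcondr /= big_andbC big_mkcondr big_pred1_eq; case: (x \in A).
Qed.

Definition next_prime m := s2val (prime_above m).

Lemma next_primeP m : m < next_prime m /\ prime (next_prime m).
Proof. by rewrite /next_prime; case: (prime_above m). Qed.

Definition nth_prime i := iter i.+1 next_prime 0.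

Lemma nth_prime_prime i : prime (nth_prime i).
Proof. exact: (next_primeP _).2. Qed.

Lemma nth_prime_inj : injective nth_prime.
Proof.
apply: incn_inj; apply: leq_mono; apply: homo_ltn; first exact: ltn_trans.
by move=> i; exact: (next_primeP _).1.
Qed.

Lemma card_set_seq_count (T : finType) (s : seq T) (P : pred T) :
  uniq s -> #|[set x in [set:: s] | P x]| = count P s.
Proof.
move=> s_uniq; rewrite -size_filter -(card_uniqP (filter_uniq P s_uniq)).
by apply: eq_card => x; rewrite !inE mem_filter andbC.
Qed.

Lemma card_set_seq (T : finType) (s : seq T) : uniq s -> #|[set:: s]| = size s.
Proof.
move=> s_uniq; rewrite -(count_predT s) -card_set_seq_count //.
by apply: eq_card => x; rewrite !inE andbT.
Qed.

Lemma card_set_count (T : finType) (S : {set T}) (P : pred T) :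
  #|[set x in S | P x]| = count P (enum S).
Proof. by rewrite -card_set_seq_count ?enum_uniq // set_enum. Qed.

Definition prime_power d := (1 < d) && (d == pdiv d ^ logn (pdiv d) d).

Lemma prime_powerP d :
  reflect (exists p k, [/\ prime p, 0 < k & d = p ^ k]) (prime_power d).
Proof.
apply: (iffP andP) => [[d_gt1 /eqP d_eq] | [p [[|k] [p_prime _ ->]]] //].
  exists (pdiv d), (logn (pdiv d) d); split; rewrite ?pdiv_prime //.
  by rewrite lt0n; apply: contraTneq d_gt1 => k0; rewrite d_eq k0.
by rewrite pdiv_pfactor // pfactorK // -{1}(expn0 p) ltn_exp2l ?prime_gt1.
Qed.

Section SetCode.

Variable T : finType.

Definition prime_code (x : T) := nth_prime (enum_rank x).

Lemma prime_code_inj : injective prime_code.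
Proof. by move=> x y /nth_prime_inj /val_inj /enum_rank_inj. Qed.

Lemma prime_code_prime x : prime (prime_code x).
Proof. exact: nth_prime_prime. Qed.

Definition set_code (A : {set T}) := \prod_(x in A) prime_code x.

Lemma set_code_gt0 A : 0 < set_code A.
Proof. by apply: prodn_cond_gt0 => x _; exact: prime_gt0 (prime_code_prime x). Qed.

Lemma logn_set_code x A : logn (prime_code x) (set_code A) = (x \in A).
Proof. by apply: logn_prod_inj_primes; [exact: prime_code_prime | exact: prime_code_inj]. Qed.

Lemma logn_set_code_eq0 p A :
  (forall x, prime_code x != p) -> logn p (set_code A) = 0.
Proof.
move=> p_code; rewrite logn_prod_primes; last exact: prime_code_prime.
by apply: big1 => x _; rewrite eq_sym (negbTE (p_code x)).
Qed.

Lemma set_code_inj : injective set_code.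
Proof.
move=> A B AB; apply/setP => x.
by have := logn_set_code x A; rewrite AB logn_set_code; case: (x \in A); case: (x \in B).
Qed.

Lemma gcd_set_code A B : gcdn (set_code A) (set_code B) = set_code (A :&: B).
Proof.
apply: eqn_from_log; rewrite ?gcdn_gt0 ?set_code_gt0 // => p.
rewrite logn_gcd ?set_code_gt0 //.
have [x /eqP <- | p_code] := pickP (fun x => prime_code x == p).
  by rewrite !logn_set_code inE; case: (x \in A); case: (x \in B).
by rewrite !logn_set_code_eq0 // => x; rewrite p_code.
Qed.

Lemma prime_code_dvd_set_code (x : T) A :
  (prime_code x %| set_code A) = (x \in A).
Proof.
rewrite -[prime_code x]expn1 pfactor_dvdn ?set_code_gt0 ?prime_code_prime //.
by rewrite logn_set_code; case: (x \in A).
Qed.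

Lemma prime_power_dvd_set_code p k (A : {set T}) :
  prime p -> 0 < k -> p ^ k %| set_code A -> exists2 x, x \in A & p ^ k = prime_code x.
Proof.
move=> p_prime k_gt0; rewrite pfactor_dvdn ?set_code_gt0 //.
have [x /eqP <- | p_code] := pickP (fun x : T => prime_code x == p); last first.
  rewrite logn_set_code_eq0 ?leqn0 => [/eqP k0 | x]; last by rewrite p_code.
  by rewrite k0 in k_gt0.
rewrite logn_set_code => k_le.
have [-> x_A] : k = 1 /\ x \in A by move: k_le k_gt0; case: (x \in A); case: k => [|[]].
by exists x; rewrite ?expn1.
Qed.

End SetCode.

Section PrimePowerDivisors.

Variable M : nat.

(* Divisors above M are dropped, so this encoding is faithful only on [1, M]. *)
Definition pp_divisors n : {set 'I_M.+1} := [set d : 'I_M.+1 | prime_power d && (d %| n)].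

Lemma pp_divisorsI m n : pp_divisors (gcdn m n) = pp_divisors m :&: pp_divisors n.
Proof. by apply/setP => d; rewrite !inE dvdn_gcd; case: (prime_power d). Qed.

Lemma logn_le_pp_divisors m n p :
  0 < m <= M -> 0 < n -> pp_divisors m \subset pp_divisors n -> logn p m <= logn p n.
Proof.
move=> /andP [m_gt0 m_le] n_gt0 /subsetP sub_mn.
have [-> // | log_gt0] := posnP (logn p m).
have p_prime : prime p by move: log_gt0; rewrite logn_gt0 mem_primes => /andP [].
have d_le : p ^ logn p m < M.+1 by rewrite ltnS (leq_trans (dvdn_leq m_gt0 (pfactor_dvdnn p m))).
have /sub_mn : Ordinal d_le \in pp_divisors m.
  by rewrite inE pfactor_dvdnn andbT; apply/prime_powerP; exists p, (logn p m).
by rewrite inE => /andP [_]; rewrite pfactor_dvdn.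
Qed.

Lemma pp_divisors_inj : {in [pred n | 0 < n <= M] &, injective pp_divisors}.
Proof.
move=> m n /andP [m_gt0 m_le] /andP [n_gt0 n_le] eq_mn; apply: eqn_from_log => // p.
by apply/eqP; rewrite eqn_leq !logn_le_pp_divisors ?m_gt0 ?n_gt0 ?eq_mn.
Qed.

End PrimePowerDivisors.

Lemma statement_C_implies_D : statement_C -> statement_D.
Proof.
move=> C T S S_closed S_ge2.
pose N := [seq set_code A | A <- enum S].
have N_uniq : uniq N by rewrite map_inj_uniq ?enum_uniq //; exact: set_code_inj.
have N_pos : all (fun n => 0 < n) N by apply/allP => _ /mapP [A _ ->]; exact: set_code_gt0.
have N_closed : gcd_closed N.
  move=> _ _ /mapP [A + ->] /mapP [B + ->]; rewrite !mem_enum => A_S B_S.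
  by rewrite gcd_set_code map_f // mem_enum; exact: S_closed.
have size_N : size N = #|S| by rewrite size_map -cardE.
have [p [k [p_prime k_gt0 /hasP [_ /mapP [A A_S ->] pk_dvd] N_count]]] :=
  C N N_uniq N_pos N_closed (leq_trans S_ge2 (eq_leq (esym size_N))).
have [x x_A pk_code] := prime_power_dvd_set_code p_prime k_gt0 pk_dvd.
rewrite mem_enum in A_S; exists x; split; first by apply/bigcupP; exists A.
move: N_count; rewrite pk_code count_map card_set_count size_N.
by under eq_count => B do rewrite /= prime_code_dvd_set_code.
Qed.

Lemma statement_D_implies_C : statement_D -> statement_C.
Proof.
move=> D N N_uniq N_pos N_closed N_ge2.
pose M := \max_(n <- N) n.
have N_bounded : {subset N <= [pred n | 0 < n <= M]}.
  by move=> n n_N; rewrite inE (allP N_pos) //= (@leq_bigmax_seq _ N xpredT id n n_N).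
pose s := [seq pp_divisors M n | n <- N].
have s_uniq : uniq s.
  by rewrite map_inj_in_uniq // => m n /N_bounded m_N /N_bounded; exact: pp_divisors_inj.
pose S := [set:: s].
have S_closed : inter_closed S.
  move=> _ _ /[!inE] /mapP [m m_N ->] /mapP [n n_N ->].
  by rewrite -pp_divisorsI map_f ?N_closed.
have size_S : #|S| = size N by rewrite card_set_seq ?size_map.
have [d [/bigcupP [B] ] ] := D _ S S_closed (leq_trans N_ge2 (eq_leq (esym size_S))).
rewrite inE => /mapP [n n_N ->]; rewrite inE => /andP [d_pp d_n].
rewrite card_set_seq_count // size_S count_map => d_count.
have /prime_powerP [p [k [p_prime k_gt0 d_pk]]] := d_pp.
exists p, k; rewrite -d_pk; split => //; first by apply/hasP; exists n.
by move: d_count; under eq_count => m do rewrite /= inE d_pp.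
Qed.

Theorem corollary2 : statement_C <-> statement_D.
Proof. by split; [exact: statement_C_implies_D | exact: statement_D_implies_C]. Qed.
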